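(* Let $X$ be a compact metric space, $f\colon X\to X$ a chain transitive continuous map and $D\in\mathcal{D}(f)$. Suppose that for any $\epsilon>0$ there is $\delta>0$ such that every $\delta$-pseudo orbit $(x_i)_{i\ge0}$ of $f$ with $x_0\in D$ is $\epsilon$-shadowed by some $x\in D$. Then for any $y,z\in D$ and $\epsilon>0$ there is $w\in D$ such that $d(z,w)\le\epsilon$ and $\limsup_{k\to\infty}d(f^k(y),f^k(w))\le\epsilon$.
   Context: A $\delta$-chain of $f$ is a finite sequence $(x_i)_{i=0}^k$, $k>0$, with $d(f(x_i),x_{i+1})\le\delta$ for all $i<k$; it is a $\delta$-cycle of length $k$ if $x_0=x_k$. $f$ is chain transitive if for all $x,y\in X$ and $\delta>0$ there is a $\delta$-chain from $x$ to $y$. For $\delta>0$, $m(f,\delta)$ is the gcd of the lengths of $\delta$-cycles; $x\sim_{f,\delta}y$ iff there is a $\delta$-chain from $x$ to $y$ whose length is divisible by $m(f,\delta)$; $x\sim_f y$ iff $x\sim_{f,\delta}y$ for all $\delta>0$; $\mathcal{D}(f)$ is the set of equivalence classes of $\sim_f$. A $\delta$-pseudo orbit is a sequence $(x_i)_{i\ge0}$ with $d(f(x_i),x_{i+1})\le\delta$ for all $i\ge0$; it is $\epsilon$-shadowed by $x$ if $d(f^i(x),x_i)\le\epsilon$ for all $i\ge0$. *)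

From HB Require Import structures.
From mathcomp Require Import all_boot all_order all_algebra.
From mathcomp Require Import all_classical all_reals all_analysis.
Set Implicit Arguments.
Unset Strict Implicit.
Unset Printing Implicit Defensive.
Import Order.TTheory GRing.Theory Num.Theory.
Local Open Scope classical_set_scope.
Local Open Scope ring_scope.

Section Defs.
Context {R : realType} {X : metricType R}.

Definition delta_chain (f : X -> X) (delta : R) (s : nat -> X) (k : nat) : Prop :=
  (0 < k)%N /\ forall i, (i < k)%N -> mdist (f (s i)) (s i.+1) <= delta.

Definition chain_from_to (f : X -> X) (delta : R) (x y : X) (k : nat) : Prop :=
  exists s : nat -> X, [/\ delta_chain f delta s k, s 0%N = x & s k = y].

Definition cycle_length (f : X -> X) (delta : R) (k : nat) : Prop :=
  exists x : X, chain_from_to f delta x x k.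

Definition chain_transitive (f : X -> X) : Prop :=
  forall (x y : X) (delta : R), 0 < delta -> exists k, chain_from_to f delta x y k.

(* m is the gcd of the (possibly infinite) set of lengths of delta-cycles,
   i.e. m = m(f, delta): m divides every length, and every common divisor
   of the lengths divides m. *)
Definition is_m (f : X -> X) (delta : R) (m : nat) : Prop :=
  (forall k, cycle_length f delta k -> (m %| k)%N) /\
  (forall d, (forall k, cycle_length f delta k -> (d %| k)%N) -> (d %| m)%N).

Definition rel_delta (f : X -> X) (delta : R) (x y : X) : Prop :=
  exists m, is_m f delta m /\ exists k, chain_from_to f delta x y k /\ (m %| k)%N.

Definition rel_f (f : X -> X) (x y : X) : Prop :=
  forall delta : R, 0 < delta -> rel_delta f delta x y.

Definition in_Df (f : X -> X) (D : set X) : Prop :=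
  exists x : X, D = [set y | rel_f f x y].

Definition pseudo_orbit (f : X -> X) (delta : R) (s : nat -> X) : Prop :=
  forall i, mdist (f (s i)) (s i.+1) <= delta.

Definition shadowed (f : X -> X) (eps : R) (s : nat -> X) (x : X) : Prop :=
  forall i, mdist (iter i f x) (s i) <= eps.

End Defs.

From HB Require Import structures.
From mathcomp Require Import all_boot all_order all_algebra.
From mathcomp Require Import all_classical all_reals all_analysis.
From mathcomp Require Import zify.
Import Order.TTheory GRing.Theory Num.Theory.
Local Open Scope classical_set_scope.
Local Open Scope ring_scope.

(* Let d be the shadowing constant for eps.  It suffices to find j and a
   d-chain of length exactly j from z to f^j(y): continued by the orbit of y it
   is a d-pseudo orbit starting at z, and a point w of D shadowing it is
   eps-close to z and, from time j on, to f^k(y).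
   The lengths of d-cycles through y form an additive semigroup, which contains
   every large multiple of its gcd g; by chain transitivity g divides every
   d-cycle length, hence m(f, d), so some d-chain from z to y has a length L
   divisible by g.  By compactness there are times i < j, multiples of some
   M > L and with j - i >= M, such that f^i(y) is d-close to f^j(y); then j - i
   is a cycle length.  Going from z to y, around a d-cycle at y of length
   j - i - L, and along the orbit of y until jumping from f^(i-1)(y) to f^j(y)
   takes exactly j steps. *)

Lemma limn_esup_le_near {R : realType} (u : (\bar R)^nat) (l : \bar R) :
  (\forall k \near \oo, (u k <= l)%E) -> (limn_esup u <= l)%E.
Proof.
move=> [K _ ul]; rewrite limn_esup_lim; apply: lime_le; first exact: is_cvg_esups.
near=> n; apply: ge_ereal_sup => _ [k /= nk <-]; apply: ul => /=.
by apply: leq_trans nk; near: n; exists K.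
Unshelve. all: by end_near. Qed.

Lemma compact_recurrence {R : realType} {X : metricType R} (v : nat -> X) (e : R) :
  compact [set: X] -> 0 < e -> exists a b, (a < b)%N /\ mdist (v a) (v b) < e.
Proof.
move=> cptX e_gt0.
have [p [_ clp]] := cptX (v @ \oo) _ filterT.
have e2_gt0 : 0 < e / 2 by rewrite divr_gt0.
have near_p N : exists2 k, (N <= k)%N & ball p (e / 2) (v k).
  have tail : (v @ \oo) [set v k | k in [set k | (N <= k)%N]].
    by exists N => // k /= Nk; exists k.
  by have [_ [[k /= Nk <-] pk]] := clp _ _ tail (nbhsx_ballx p _ e2_gt0); exists k.
have [a _ pa] := near_p 0%N; have [b ab pb] := near_p a.+1.
exists a, b; split => //.
by have := ball_splitl (ball_sym pa) (ball_sym pb); rewrite ballEmdist.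
Qed.

Section AdditiveSemigroup.
Local Open Scope nat_scope.
Context {S : nat -> Prop}.
Hypothesis S_add : forall a b, S a -> S b -> S (a + b).
Hypothesis S_gt0 : forall a, S a -> 0 < a.

Lemma semigroup_mulD k x y : S x -> S y -> S (k * x + y).
Proof.
move=> Sx Sy; elim: k => [|k IHk]; first by rewrite add0n.
by rewrite mulSn -addnA; apply: S_add.
Qed.

(* The least positive difference of two elements of S divides every element of S. *)
Lemma semigroup_min_gap c : S c ->
  exists g, [/\ 0 < g, forall s, S s -> g %| s & exists2 b, S b & S (b + g)].
Proof.
move=> Sc.
pose gap n := exists2 b, S b & S (b + n).
have gap_c : exists n, `[< 0 < n /\ gap n >].
  by exists c; apply/asboolP; split; [exact: S_gt0 | exists c => //; exact: S_add].
case: (ex_minnP gap_c) => g /asboolP [g_gt0 [b Sb Sbg]] g_min.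
exists g; split => // [s Ss|]; last by exists b.
rewrite /dvdn; apply/eqP; set r := s %% g; case: (posnP r) => [-> // | r_gt0].
suff : g <= r by rewrite leqNgt ltn_pmod.
apply/g_min/asboolP; split => //.
exists ((s %/ g) * (b + g) + b); first exact: semigroup_mulD.
have -> : s %/ g * (b + g) + b + r = s + ((s %/ g) * b + b).
  by have := divn_eq s g; rewrite -/r mulnDr; lia.
by apply: S_add => //; apply: semigroup_mulD.
Qed.

Lemma semigroup_large_multiples c : S c ->
  exists g, [/\ 0 < g, forall s, S s -> g %| s &
    exists T, forall n, T <= n -> g %| n -> S n].
Proof.
move=> /semigroup_min_gap [g [g_gt0 g_dvd [b Sb Sbg]]].
exists g; split => //.
have /dvdnP [q b_eq] := g_dvd b Sb.
have q_gt0 : 0 < q by move: (S_gt0 _ Sb); rewrite b_eq muln_gt0 => /andP[].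
exists (q * q * g); move=> n + /dvdnP [N n_eq]; rewrite n_eq => Ng_ge.
have qqN : q * q <= N by rewrite -(leq_pmul2r g_gt0).
(* N g = (t - r - 1) b + r (b + g) + b, where N = t q + r with r < q <= t. *)
have r_lt : N %% q < q by rewrite ltn_pmod.
have t_ge : q <= N %/ q by rewrite leq_divRL.
have -> : N * g = (N %/ q - N %% q - 1) * b + (N %% q * (b + g) + b).
  rewrite b_eq {1}(divn_eq N q); nia.
by apply: semigroup_mulD => //; apply: semigroup_mulD.
Qed.

End AdditiveSemigroup.

Section Chains.
Context {R : realType} {X : metricType R} {f : X -> X} {d : R}.

Lemma chain_cat {x y w k1 k2} :
  chain_from_to f d x y k1 -> chain_from_to f d y w k2 ->
  chain_from_to f d x w (k1 + k2).
Proof.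
move=> [s1 [[k1_gt0 s1_chain] <- s1_end]] [s2 [[k2_gt0 s2_chain] s2_0 <-]].
pose s i := if (i <= k1)%N then s1 i else s2 (i - k1)%N.
have s_right i : (k1 <= i)%N -> s i = s2 (i - k1)%N.
  move=> k1_le; rewrite /s; case: leqP => // i_le.
  have -> : i = k1 by lia.
  by rewrite subnn s2_0 s1_end.
exists s; split; last 2 first.
- by rewrite /s leq0n.
- by rewrite s_right ?leq_addr // addKn.
split; first by rewrite addn_gt0 k1_gt0.
move=> i i_lt; case: (ltnP i k1) => [i_lt_k1 | k1_le].
  by rewrite /s (ltnW i_lt_k1) i_lt_k1; exact: s1_chain.
rewrite !s_right ?(leq_trans k1_le) // subSn //; apply: s2_chain; lia.
Qed.

Lemma iter_chain x p n : 0 <= d -> (0 < n)%N -> mdist (iter n f x) p <= d ->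
  chain_from_to f d x p n.
Proof.
move=> d_ge0 n_gt0 np.
exists (fun t => if (t < n)%N then iter t f x else p); split; last 2 first.
- by rewrite /= n_gt0.
- by rewrite /= ltnn.
split => // i i_lt /=; rewrite i_lt; case: ltnP => [_ | n_le].
  by rewrite -iterS mdistxx.
have n_eq : n = i.+1 by lia.
by rewrite -iterS -n_eq.
Qed.

Lemma chain_pseudo_orbit {x y K} : 0 <= d -> chain_from_to f d x (iter K f y) K ->
  exists s, [/\ pseudo_orbit f d s, s 0%N = x & forall t, (K <= t)%N -> s t = iter t f y].
Proof.
move=> d_ge0 [s1 [[_ s1_chain] s1_0 s1_K]].
pose s t := if (t <= K)%N then s1 t else iter t f y.
have s_orbit t : (K <= t)%N -> s t = iter t f y.
  by move=> K_le; rewrite /s; case: leqP => // t_le; have -> : t = K by lia.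
exists s; split => // i; case: (ltnP i K) => [i_lt | K_le].
  by rewrite /s (ltnW i_lt) i_lt; exact: s1_chain.
by rewrite !s_orbit ?(leq_trans K_le) // -iterS mdistxx.
Qed.

Lemma cycle_length_dvd {y g} : chain_transitive f -> 0 < d ->
  (forall n, chain_from_to f d y y n -> (g %| n)%N) ->
  forall k, cycle_length f d k -> (g %| k)%N.
Proof.
move=> f_ct d_gt0 g_dvd k [p pp].
have [a yp] := f_ct y p d d_gt0; have [b py] := f_ct p y d d_gt0.
have := g_dvd _ (chain_cat (chain_cat yp pp) py).
by rewrite addnAC dvdn_addr // g_dvd //; exact: chain_cat yp py.
Qed.

Lemma rel_delta_chain_dvd {x y z g} : chain_transitive f -> 0 < d ->
  (forall k, cycle_length f d k -> (g %| k)%N) ->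
  rel_delta f d x y -> rel_delta f d x z ->
  exists2 L, chain_from_to f d z y L & (g %| L)%N.
Proof.
move=> f_ct d_gt0 g_cycle [m [[_ m_gcd] [ky [xy m_ky]]]] [m' [[_ m'_gcd] [kz [xz m'_kz]]]].
have g_ky := dvdn_trans (m_gcd _ g_cycle) m_ky.
have g_kz := dvdn_trans (m'_gcd _ g_cycle) m'_kz.
have [r zx] := f_ct z x d d_gt0.
exists (r + ky)%N; first exact: chain_cat zx xy.
rewrite (dvdn_addl _ g_ky) -(dvdn_addl _ g_kz); apply: g_cycle; exists z; exact: chain_cat zx xz.
Qed.

Lemma chain_to_iter_same_length {y z g T L} :
  compact [set: X] -> 0 < d ->
  (forall k, cycle_length f d k -> (g %| k)%N) ->
  (forall n, (T <= n)%N -> (g %| n)%N -> chain_from_to f d y y n) ->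
  chain_from_to f d z y L -> (g %| L)%N ->
  exists j, chain_from_to f d z (iter j f y) j.
Proof.
move=> cptX d_gt0 g_cycle y_cycle zy g_L.
have [M M_def] : exists M, M = (L + T).+1 by eexists.
have [a [b [ab close]]] := compact_recurrence (fun k => iter (k.+1 * M) f y) _ cptX d_gt0.
have [i i_def] : exists i, i = (a.+1 * M)%N by eexists.
have [j j_def] : exists j, j = (b.+1 * M)%N by eexists.
rewrite /= -i_def -j_def in close.
have iMj : (i + M <= j)%N by rewrite i_def j_def -mulSnr leq_mul2r ltnS ab orbT.
have i_gt0 : (0 < i)%N by rewrite i_def muln_gt0 M_def.
have g_ji : (g %| j - i)%N.
  apply: g_cycle; exists (iter i f y); apply: iter_chain; [exact: ltW | lia |].
  by rewrite -iterD subnK 1?metric_sym; [exact: ltW | lia].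
have yy : chain_from_to f d y y (j - i - L) by apply: y_cycle; [lia | rewrite dvdn_sub].
have yj : chain_from_to f d y (iter j f y) i by apply: iter_chain => //; exact: ltW.
exists j; have := chain_cat (chain_cat zy yy) yj.
by have -> : (L + (j - i - L) + i = j)%N by lia.
Qed.

End Chains.

Theorem lemma5p3 (R : realType) (X : metricType R) (f : X -> X)
  (hcpt : compact [set: X]) (hcont : continuous f)
  (hct : chain_transitive f) (D : set X) (hD : in_Df f D)
  (hsh : forall eps : R, 0 < eps -> exists2 delta : R, 0 < delta &
     forall s : nat -> X, pseudo_orbit f delta s -> D (s 0%N) ->
       exists2 x : X, D x & shadowed f eps s x) :
  forall (y z : X) (eps : R), D y -> D z -> 0 < eps ->
    exists2 w : X, D w &
      mdist z w <= eps /\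
      (limn_esup (fun k : nat => (mdist (iter k f y) (iter k f w))%:E) <= eps%:E)%E.
Proof.
move=> y z eps Dy Dz eps_gt0.
have [d d_gt0 shadow] := hsh eps eps_gt0.
have [x0 D_def] := hD.
have [c yc] := hct y y d d_gt0.
have y_loop_add a b : chain_from_to f d y y a -> chain_from_to f d y y b ->
    chain_from_to f d y y (a + b) by exact: chain_cat.
have y_loop_gt0 a : chain_from_to f d y y a -> (0 < a)%N by case=> ? [[]].
have [g [_ g_ycycle [T y_cycle]]] := semigroup_large_multiples y_loop_add y_loop_gt0 c yc.
have g_cycle := cycle_length_dvd hct d_gt0 g_ycycle.
have [L zy g_L] : exists2 L, chain_from_to f d z y L & (g %| L)%N.
  by move: Dy Dz; rewrite D_def => xy xz; exact: rel_delta_chain_dvd (xy d d_gt0) (xz d d_gt0).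
have [j zj] := chain_to_iter_same_length hcpt d_gt0 g_cycle y_cycle zy g_L.
have [s [s_orbit s_0 s_tail]] := chain_pseudo_orbit (ltW d_gt0) zj.
have [w Dw w_shadow] : exists2 w, D w & shadowed f eps s w by apply: shadow => //; rewrite s_0.
exists w => //; split; first by have := w_shadow 0%N; rewrite s_0 metric_sym.
apply: limn_esup_le_near; exists j => // k /= jk.
by rewrite lee_fin metric_sym -s_tail //; exact: w_shadow.
Qed.
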